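(* Let $X=\ell_p$ for some $1\le p<\infty$, or $X=c_0$, considered as a Banach algebra under coordinatewise multiplication, and let $\lambda\in\mathbb C$ with $|\lambda|>1$. Let $\lambda B$ be the operator $\lambda B(x(1),x(2),x(3),\ldots)=(\lambda x(2),\lambda x(3),\lambda x(4),\ldots)$ on $X$. If $x$ is a frequently hypercyclic vector for $\lambda B$, then there exists a natural number $M$ such that the coordinatewise power $x^m$ is not a hypercyclic vector for $\lambda B$ for any $m\geq M$.
   Context: For an operator $T$ on $X$, a vector $x$ is hypercyclic if $\{x,Tx,T^2x,\ldots\}$ is dense in $X$; it is frequently hypercyclic if for every non-empty open $U\subset X$ the set $\{n\in\mathbb N_0: T^nx\in U\}$ has positive lower density, where the lower density of $A\subset\mathbb N_0$ is $\liminf_{N\to\infty}\frac{\mathrm{card}\{0\le n\le N:n\in A\}}{N+1}$. *)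

From Stdlib Require Import Reals ClassicalEpsilon.
From Coquelicot Require Import Coquelicot.
Open Scope R_scope.

(* a^p for a >= 0 and real p > 0, with the convention 0^p = 0
   (Stdlib's Rpower gives Rpower 0 p = 1, so we fix it). *)
Definition powp (a p : R) : R := if Req_EM_T a 0 then 0 else Rpower a p.

Inductive seqspace := Lp (p : R) | C0.

Definition valid_space (X : seqspace) : Prop :=
  match X with Lp p => 1 <= p | C0 => True end.

Definition in_space (X : seqspace) (x : nat -> C) : Prop :=
  match X with
  | Lp p => ex_series (fun n => powp (Cmod (x n)) p)
  | C0 => is_lim_seq (fun n => Cmod (x n)) 0
  end.

Definition snorm (X : seqspace) (x : nat -> C) : R :=
  match X with
  | Lp p => powp (Series (fun n => powp (Cmod (x n)) p)) (/ p)
  | C0 => real (Sup_seq (fun n => Cmod (x n)))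
  end.

Definition sdist (X : seqspace) (x y : nat -> C) : R :=
  snorm X (fun n => Cminus (x n) (y n)).

Definition open_in (X : seqspace) (U : (nat -> C) -> Prop) : Prop :=
  (forall u, U u -> in_space X u) /\
  (forall u, U u -> exists eps, 0 < eps /\
     forall v, in_space X v -> sdist X u v < eps -> U v).

Definition lamB (lam : C) (x : nat -> C) : nat -> C :=
  fun n => Cmult lam (x (S n)).

Fixpoint Cpown (z : C) (m : nat) : C :=
  match m with O => RtoC 1 | S k => Cmult z (Cpown z k) end.
Definition seq_pow (x : nat -> C) (m : nat) : nat -> C := fun n => Cpown (x n) m.

Definition hypercyclic (X : seqspace) (T : (nat -> C) -> (nat -> C)) (x : nat -> C) : Prop :=
  in_space X x /\
  forall y, in_space X y -> forall eps, 0 < eps ->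
    exists n : nat, sdist X (Nat.iter n T x) y < eps.

Definition indic (A : nat -> Prop) (n : nat) : R :=
  if excluded_middle_informative (A n) then 1 else 0.
Definition count_upto (A : nat -> Prop) (N : nat) : R := sum_f_R0 (indic A) N.
Definition lower_density (A : nat -> Prop) : Rbar :=
  LimInf_seq (fun N => count_upto A N / INR (S N)).

Definition freq_hypercyclic (X : seqspace) (T : (nat -> C) -> (nat -> C)) (x : nat -> C) : Prop :=
  in_space X x /\
  forall U, open_in X U -> (exists u, U u) ->
    Rbar_lt 0 (lower_density (fun n => U (Nat.iter n T x))).

From Stdlib Require Import Reals Lra Lia Arith ClassicalEpsilon.
From Coquelicot Require Import Coquelicot.
Open Scope R_scope.

(* Let U be the open set of sequences whose coordinates are bounded by some r < 1.
   Frequent hypercyclicity makes A = {k | (lam B)^k x \in U} of positive lower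
   density d, and k \in A gives |lam|^k |x n| < 1 for every n >= k.  Take m > 2/d.
   If x^m were hypercyclic, approximating a large multiple of e_0 would give
   arbitrarily large n with |lam|^n |x n|^m > 1; but the density of A yields some
   k \in A with n/m <= k <= n, whence |lam|^n |x n|^m <= (|lam|^k |x n|)^m < 1. *)

Lemma powp_ge0 a p : 0 <= powp a p.
Proof.
  unfold powp. destruct (Req_EM_T a 0); [lra|].
  left. apply exp_pos.
Qed.

Lemma powp_0 p : powp 0 p = 0.
Proof. unfold powp. destruct (Req_EM_T 0 0); [reflexivity|lra]. Qed.

Lemma powp_Rpower a p : 0 < a -> powp a p = Rpower a p.
Proof. intros Ha. unfold powp. destruct (Req_EM_T a 0); [lra|reflexivity]. Qed.

Lemma powpK a p : 0 <= a -> 0 < p -> powp (powp a p) (/ p) = a.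
Proof.
  intros Ha Hp. destruct (Req_dec a 0) as [->|Hna].
  - now rewrite !powp_0.
  - rewrite (powp_Rpower a), powp_Rpower by (try apply exp_pos; lra).
    rewrite Rpower_mult, Rinv_r, Rpower_1; lra.
Qed.

Lemma powp_le a b p : 0 <= a <= b -> 0 < p -> powp a p <= powp b p.
Proof.
  intros Hab Hp. destruct (Req_dec a 0) as [->|Hna].
  - rewrite powp_0. apply powp_ge0.
  - rewrite !powp_Rpower by lra. apply Rle_Rpower_l; lra.
Qed.

Lemma powp_mult a b p : 0 <= a -> 0 <= b -> powp (a * b) p = powp a p * powp b p.
Proof.
  intros Ha Hb. destruct (Req_dec a 0) as [->|Hna].
  - rewrite Rmult_0_l, powp_0. ring.
  - destruct (Req_dec b 0) as [->|Hnb].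
    + rewrite Rmult_0_r, powp_0. ring.
    + rewrite !powp_Rpower by nra. symmetry. apply Rpower_mult_distr; lra.
Qed.

(* [c <= a + b <= 2 max(a, b)] *)
Lemma powp_le_add a b c p : 0 <= a -> 0 <= b -> 0 <= c <= a + b -> 0 < p ->
  powp c p <= Rpower 2 p * (powp a p + powp b p).
Proof.
  intros Ha Hb Hc Hp.
  assert (H2 : 0 < Rpower 2 p) by apply exp_pos.
  pose proof (powp_ge0 a p). pose proof (powp_ge0 b p).
  pose proof (Rmax_l a b). pose proof (Rmax_r a b).
  assert (Hmax : powp (Rmax a b) p <= powp a p + powp b p) by (apply Rmax_case; lra).
  assert (Hc2 : powp c p <= powp (2 * Rmax a b) p) by (apply powp_le; lra).
  rewrite powp_mult, (powp_Rpower 2) in Hc2 by lra.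
  nra.
Qed.

Lemma sum_f_R0_ge_term (f : nat -> R) (i N : nat) :
  (forall n, 0 <= f n) -> (i <= N)%nat -> f i <= sum_f_R0 f N.
Proof.
  intros Hf HiN. induction N as [|N IH]; simpl.
  - replace i with 0%nat by lia. lra.
  - destruct (Nat.eq_dec i (S N)) as [->|Hne].
    + pose proof (cond_pos_sum f N Hf). lra.
    + specialize (IH ltac:(lia)). specialize (Hf (S N)). lra.
Qed.

Lemma Series_ge_term (f : nat -> R) (i : nat) :
  (forall n, 0 <= f n) -> ex_series f -> f i <= Series f.
Proof.
  intros Hf Hex.
  apply (Rle_trans _ (sum_f_R0 f i)); [now apply sum_f_R0_ge_term|].
  apply sum_incr; [|exact Hf].
  apply is_series_Reals, Series_correct, Hex.
Qed.

Lemma ex_series_zero : ex_series (fun _ : nat => 0).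
Proof.
  exists 0. apply is_series_Reals. intros eps Heps. exists 0%nat. intros n _.
  rewrite sum_cte. unfold Rdist. rewrite Rmult_0_l, Rminus_0_r, Rabs_R0. exact Heps.
Qed.

Lemma is_lim_seq_0_bounded (u : nat -> R) :
  is_lim_seq u 0 -> exists B, forall n, u n <= B.
Proof.
  intros Hu. apply is_lim_seq_spec in Hu. destruct (Hu (mkposreal 1 Rlt_0_1)) as [N HN].
  exists (1 + sum_f_R0 (fun k => Rabs (u k)) N). intros n.
  pose proof (Rle_abs (u n)).
  pose proof (cond_pos_sum (fun k => Rabs (u k)) N (fun k => Rabs_pos _)).
  destruct (le_lt_dec n N) as [HnN|HNn].
  - pose proof (sum_f_R0_ge_term (fun k => Rabs (u k)) n N (fun k => Rabs_pos _) HnN). lra.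
  - specialize (HN n ltac:(lia)). simpl in HN. rewrite Rminus_0_r in HN. lra.
Qed.

Lemma le_real_Sup_seq (u : nat -> R) (B : R) (i : nat) :
  (forall n, u n <= B) -> u i <= real (Sup_seq u).
Proof.
  intros HB.
  pose proof (Sup_seq_minor_le u (u i) i (Rle_refl _)) as Hlo.
  destruct (Sup_seq u) as [s| |] eqn:Hs; simpl in Hlo |- *; try easy.
  destruct (proj1 (Sup_seq_minor_lt u B)) as [n Hn]; [now rewrite Hs|].
  specialize (HB n). simpl in Hn. lra.
Qed.

Lemma in_space_minus X u v : valid_space X -> in_space X u -> in_space X v ->
  in_space X (fun n => Cminus (u n) (v n)).
Proof.
  assert (Htri : forall n, Cmod (Cminus (u n) (v n)) <= Cmod (u n) + Cmod (v n)).
  { intros n. unfold Cminus. rewrite <- (Cmod_opp (v n)). apply Cmod_triangle. }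
  destruct X as [p|]; simpl; intros Hp Hu Hv.
  - apply (@ex_series_le R_AbsRing R_CompleteNormedModule _
      (fun n => Rpower 2 p * (powp (Cmod (u n)) p + powp (Cmod (v n)) p))).
    + intros n. rewrite Rabs_pos_eq by apply powp_ge0.
      apply powp_le_add; try apply Cmod_ge_0; try lra.
      split; [apply Cmod_ge_0|apply Htri].
    + apply (ex_series_scal_l (Rpower 2 p)
        (fun n => powp (Cmod (u n)) p + powp (Cmod (v n)) p)).
      now apply (ex_series_plus (fun n => powp (Cmod (u n)) p)).
  - apply (is_lim_seq_le_le (fun _ => 0) _ (fun n => Cmod (u n) + Cmod (v n))).
    + intros n. split; [apply Cmod_ge_0|apply Htri].
    + apply is_lim_seq_const.
    + replace (Finite 0) with (Finite (0 + 0)) by (f_equal; ring).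
      now apply is_lim_seq_plus'.
Qed.

Lemma in_space_lamB X lam v : in_space X v -> in_space X (lamB lam v).
Proof.
  unfold lamB. destruct X as [p|]; simpl; intros Hv.
  - apply (ex_series_ext (fun n => scal (powp (Cmod lam) p) (powp (Cmod (v (S n))) p))).
    + intros n. now rewrite Cmod_mult, powp_mult by apply Cmod_ge_0.
    + apply (@ex_series_scal_l R_AbsRing R_NormedModule).
      apply (ex_series_incr_1 (fun k => powp (Cmod (v k)) p)), Hv.
  - apply (is_lim_seq_ext (fun n => Cmod lam * Cmod (v (S n)))).
    + intros n. now rewrite Cmod_mult.
    + replace (Finite 0) with (Rbar_mult (Cmod lam) 0) by (simpl; f_equal; ring).
      apply is_lim_seq_scal_l, (is_lim_seq_incr_1 (fun k => Cmod (v k))), Hv.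
Qed.

Lemma in_space_iter_lamB X lam v n : in_space X v -> in_space X (Nat.iter n (lamB lam) v).
Proof. intros Hv. induction n; simpl; [exact Hv|now apply in_space_lamB]. Qed.

Definition impulse (c : C) : nat -> C :=
  fun i => match i with O => c | S _ => RtoC 0 end.

Lemma in_space_impulse X c : in_space X (impulse c).
Proof.
  destruct X as [p|]; simpl.
  - apply (ex_series_incr_1 (fun n => powp (Cmod (impulse c n)) p)).
    apply (ex_series_ext (fun _ => 0)); [|exact ex_series_zero].
    intros n. simpl. now rewrite Cmod_0, powp_0.
  - apply (is_lim_seq_incr_1 (fun n => Cmod (impulse c n))).
    apply (is_lim_seq_ext (fun _ => 0)); [|apply is_lim_seq_const].
    intros n. simpl. now rewrite Cmod_0.
Qed.

Lemma Cmod_le_snorm X w i : valid_space X -> in_space X w -> Cmod (w i) <= snorm X w.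
Proof.
  destruct X as [p|]; simpl; intros Hp Hw.
  - rewrite <- (powpK (Cmod (w i)) p) by (try apply Cmod_ge_0; lra).
    apply powp_le; [|apply Rinv_0_lt_compat; lra].
    split; [apply powp_ge0|].
    apply (Series_ge_term (fun n => powp (Cmod (w n)) p)); [|exact Hw].
    intros n; apply powp_ge0.
  - destruct (is_lim_seq_0_bounded _ Hw) as [B HB].
    exact (le_real_Sup_seq _ B i HB).
Qed.

Lemma Cmod_Cpown z m : Cmod (Cpown z m) = Cmod z ^ m.
Proof. induction m as [|m IH]; simpl; [apply Cmod_1|now rewrite Cmod_mult, IH]. Qed.

Lemma iter_lamB lam v n i :
  Nat.iter n (lamB lam) v i = Cmult (Cpown lam n) (v (n + i)%nat).
Proof.
  revert i. induction n as [|n IH]; intros i; simpl.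
  - now rewrite Cmult_1_l.
  - unfold lamB. rewrite IH, Cmult_assoc.
    now replace (n + S i)%nat with (S (n + i)) by lia.
Qed.

Lemma Cmod_iter_lamB lam v n i :
  Cmod (Nat.iter n (lamB lam) v i) = Cmod lam ^ n * Cmod (v (n + i)%nat).
Proof. now rewrite iter_lamB, Cmod_mult, Cmod_Cpown. Qed.

Definition coords_lt1 (X : seqspace) (v : nat -> C) : Prop :=
  in_space X v /\ exists r, r < 1 /\ forall i, Cmod (v i) <= r.

Lemma open_coords_lt1 X : valid_space X -> open_in X (coords_lt1 X).
Proof.
  intros HX. split; [now intros u []|].
  intros u [Hu [r [Hr Hur]]]. exists (1 - r). split; [lra|].
  intros v Hv Huv. split; [exact Hv|]. exists (r + sdist X u v). split; [lra|].
  intros i.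
  pose proof (Cmod_le_snorm X _ i HX (in_space_minus X u v HX Hu Hv)) as Hi.
  pose proof (Cmod_triangle (u i) (Copp (Cminus (u i) (v i)))) as Htri.
  replace (Cplus (u i) (Copp (Cminus (u i) (v i)))) with (v i) in Htri by ring.
  rewrite Cmod_opp in Htri. specialize (Hur i). unfold sdist. lra.
Qed.

Lemma coords_lt1_impulse0 X : coords_lt1 X (impulse (RtoC 0)).
Proof.
  split; [apply in_space_impulse|].
  exists 0. split; [lra|]. intros [|i]; simpl; rewrite Cmod_0; lra.
Qed.

Lemma count_upto_le A N : count_upto A N <= INR (S N).
Proof.
  unfold count_upto, indic. induction N as [|N IH]; simpl sum_f_R0.
  - destruct (excluded_middle_informative (A 0%nat)); simpl; lra.
  - rewrite (S_INR (S N)).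
    destruct (excluded_middle_informative (A (S N))); lra.
Qed.

Lemma count_upto_le_bound (A : nat -> Prop) (r : R) N : 0 <= r ->
  (forall k, (k <= N)%nat -> A k -> INR k < r) -> count_upto A N <= r + 1.
Proof.
  intros Hr. induction N as [|N IH]; intros HA.
  - pose proof (count_upto_le A 0). simpl INR in *. lra.
  - unfold count_upto, indic. simpl sum_f_R0. fold (indic A) (count_upto A N).
    destruct (excluded_middle_informative (A (S N))) as [HSN|HSN].
    + pose proof (count_upto_le A N). specialize (HA (S N) (le_n _) HSN). lra.
    + specialize (IH ltac:(auto)). lra.
Qed.

Lemma lower_density_pos_count A : Rbar_lt 0 (lower_density A) ->
  exists d, 0 < d /\ exists N1, forall N, (N1 <= N)%nat -> d * INR (S N) < count_upto A N.
Proof.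
  intros Hpos.
  set (ratio := fun N => count_upto A N / INR (S N)).
  change (Rbar_lt 0 (LimInf_seq ratio)) in Hpos.
  assert (Hratio : exists d, 0 < d /\ exists N1, forall N, (N1 <= N)%nat -> d < ratio N).
  { destruct (ex_LimInf_seq ratio) as [L HL].
    rewrite (is_LimInf_seq_unique _ _ HL) in Hpos.
    destruct L as [l| |]; simpl in Hpos, HL; [|exists 1; split; [lra|] |easy].
    - exists (l / 2). split; [lra|].
      destruct (HL (mkposreal (l / 2) ltac:(lra))) as [_ [N1 HN1]].
      exists N1. intros N HN. specialize (HN1 N HN). simpl in HN1. lra.
    - destruct (HL 1) as [N1 HN1]. exists N1. exact HN1. }
  destruct Hratio as [d [Hd [N1 HN1]]]. exists d. split; [exact Hd|]. exists N1.
  intros N HN. specialize (HN1 N HN). unfold ratio in HN1.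
  assert (HSN : 0 < INR (S N)) by (apply lt_0_INR; lia).
  apply (Rmult_lt_compat_r (INR (S N))) in HN1; [|exact HSN].
  unfold Rdiv in HN1. rewrite Rmult_assoc, Rinv_l in HN1 by lra. lra.
Qed.

(* Without such a [k], [A] would have at most [n/m + 1] elements in [0, n], which is less than
   [d (n+1)] as soon as [m, n > 2/d]. *)
Lemma lower_density_pos_hits A : Rbar_lt 0 (lower_density A) ->
  exists M N, (0 < M)%nat /\ forall m n, (M <= m)%nat -> (N <= n)%nat ->
    exists k, (k <= n)%nat /\ A k /\ (n <= m * k)%nat.
Proof.
  intros HA. destruct (lower_density_pos_count A HA) as [d [Hd [N1 HN1]]].
  destruct (INR_unbounded (2 / d)) as [M0 HM0].
  exists (S M0), (Nat.max N1 M0). split; [lia|]. intros m n Hm Hn.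
  destruct (classic (exists k, (k <= n)%nat /\ A k /\ (n <= m * k)%nat)) as [Hk|Hno];
    [exact Hk|exfalso].
  assert (Hm0 : 0 < INR m) by (apply lt_0_INR; lia).
  set (r := INR n / INR m).
  assert (Hr : INR m * r = INR n) by (unfold r; field; lra).
  assert (Hsmall : forall k, (k <= n)%nat -> A k -> INR k < r).
  { intros k Hkn Hk. apply (Rmult_lt_reg_l (INR m)); [exact Hm0|]. rewrite Hr, <- mult_INR.
    apply lt_INR. destruct (Nat.lt_ge_cases (m * k) n) as [Hlt|Hge]; [exact Hlt|].
    exfalso. apply Hno. exists k. auto. }
  assert (Hr0 : 0 <= r) by (unfold r; apply Rdiv_le_0_compat; [apply pos_INR|lra]).
  pose proof (count_upto_le_bound A r n Hr0 Hsmall) as Hup.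
  specialize (HN1 n ltac:(lia)). rewrite S_INR in HN1.
  assert (HdM0 : 2 < d * INR M0).
  { apply (Rmult_lt_compat_l d) in HM0; [|exact Hd]. unfold Rdiv in HM0.
    rewrite <- Rmult_assoc, (Rmult_comm d 2), Rmult_assoc, Rinv_r in HM0; lra. }
  assert (HM0m : INR M0 <= INR m) by (apply le_INR; lia).
  assert (HM0n : INR M0 <= INR n) by (apply le_INR; lia).
  assert (Hdm : d * INR M0 <= d * INR m) by (apply Rmult_le_compat_l; lra).
  assert (Hdn : d * INR M0 <= d * INR n) by (apply Rmult_le_compat_l; lra).
  assert (Hrn : 2 * r <= d * INR n).
  { rewrite <- Hr, <- Rmult_assoc. apply Rmult_le_compat_r; lra. }
  lra.
Qed.

Lemma hypercyclic_lamB_unbounded X lam v : valid_space X -> hypercyclic X (lamB lam) v ->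
  forall N, exists n, (N <= n)%nat /\ 1 < Cmod lam ^ n * Cmod (v n).
Proof.
  intros HX [Hv Hhc] N.
  set (g := fun j => Cmod lam ^ j * Cmod (v j)).
  assert (Hg : forall j, 0 <= g j).
  { intros j. apply Rmult_le_pos; [apply pow_le|]; apply Cmod_ge_0. }
  pose proof (cond_pos_sum g N Hg) as Hsum.
  (* Approximating [K e_0] within [1/2] forces [g n > K - 1/2 = 1 + g 0 + ... + g N]. *)
  set (K := 3 / 2 + sum_f_R0 g N).
  destruct (Hhc (impulse (RtoC K)) (in_space_impulse X _) (1 / 2) ltac:(lra)) as [n Hn].
  set (a := Nat.iter n (lamB lam) v 0%nat).
  assert (Hclose : Cmod (Cminus a (RtoC K)) < 1 / 2).
  { eapply Rle_lt_trans; [|exact Hn].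
    apply (Cmod_le_snorm X (fun i => Cminus (Nat.iter n (lamB lam) v i) (impulse (RtoC K) i)) 0 HX).
    apply in_space_minus; [exact HX|now apply in_space_iter_lamB|apply in_space_impulse]. }
  assert (Hga : Cmod a = g n) by (unfold a; now rewrite Cmod_iter_lamB, Nat.add_0_r).
  assert (Hgn : K - 1 / 2 < g n).
  { pose proof (Cmod_triangle a (Copp (Cminus a (RtoC K)))) as Htri.
    replace (Cplus a (Copp (Cminus a (RtoC K)))) with (RtoC K) in Htri by ring.
    rewrite Cmod_opp, Cmod_R, Rabs_pos_eq in Htri by (unfold K; lra). lra. }
  exists n. split; [|unfold K in Hgn; fold (g n); lra].
  destruct (Nat.le_gt_cases N n) as [HNn|HnN]; [exact HNn|].
  pose proof (sum_f_R0_ge_term g n N Hg ltac:(lia)). unfold K in Hgn. lra.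
Qed.

Lemma coords_lt1_iter_lamB X lam x k n :
  coords_lt1 X (Nat.iter k (lamB lam) x) -> (k <= n)%nat -> Cmod lam ^ k * Cmod (x n) < 1.
Proof.
  intros [_ [r [Hr Hx]]] Hkn. specialize (Hx (n - k)%nat).
  rewrite Cmod_iter_lamB in Hx. replace (k + (n - k))%nat with n in Hx by lia. lra.
Qed.

Lemma pow_mul_pow_lt1 l a k m n : 1 <= l -> 0 <= a -> l ^ k * a < 1 ->
  (0 < m)%nat -> (n <= m * k)%nat -> l ^ n * a ^ m < 1.
Proof.
  intros Hl Ha Hka Hm Hn.
  assert (Hkm : (l ^ k * a) ^ m < 1).
  { apply pow_lt_1_compat; [split; [apply Rmult_le_pos; [apply pow_le; lra|]|]|]; lra || lia. }
  rewrite Rpow_mult_distr, <- pow_mult in Hkm.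
  assert (l ^ n <= l ^ (k * m)) by (apply Rle_pow; [lra|lia]).
  pose proof (pow_le a m Ha). nra.
Qed.

Theorem proposition1p2 (X : seqspace) (lam : C) (x : nat -> C) :
  valid_space X -> 1 < Cmod lam ->
  freq_hypercyclic X (lamB lam) x ->
  exists M : nat, forall m : nat, (M <= m)%nat ->
    ~ hypercyclic X (lamB lam) (seq_pow x m).
Proof.
  intros HX Hlam [_ Hfreq].
  destruct (lower_density_pos_hits _
    (Hfreq _ (open_coords_lt1 X HX) (ex_intro _ _ (coords_lt1_impulse0 X))))
    as [M [N [HM Hhits]]].
  exists M. intros m Hm Hhc.
  destruct (hypercyclic_lamB_unbounded X lam _ HX Hhc N) as [n [HNn Hbig]].
  destruct (Hhits m n Hm HNn) as [k [Hkn [Hk Hnk]]].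
  pose proof (coords_lt1_iter_lamB X lam x k n Hk Hkn) as Hsmall.
  unfold seq_pow in Hbig. rewrite Cmod_Cpown in Hbig.
  pose proof (pow_mul_pow_lt1 (Cmod lam) (Cmod (x n)) k m n
    ltac:(lra) (Cmod_ge_0 _) Hsmall ltac:(lia) Hnk).
  lra.
Qed.
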